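(* Consider an instance of \textsc{Min-Lin-Eq$(q)$-Full} on the complete graph with $n$ vertices and $m=\binom n2$ edges. Fix an optimal assignment $\mathrm{OPT}$, violating $\mathrm{OPT_{val}}=\varepsilon m$ constraints with $0\le \varepsilon<\frac12$, and call the edges violated by $\mathrm{OPT}$ red. Call a vertex $v$ flippable if the number of red edges incident to $v$ is at least $(n-1)/2-\varepsilon(n-1)$. Then there are at most $\varepsilon\nu n$ flippable vertices, where $\nu=2/(1-2\varepsilon)$.
   Context: \textsc{Min-Lin-Eq$(q)$-Full}: given a complete simple graph $G=(V,E)$, a positive integer $q$, and for each ordered pair $(u,v)$ of distinct vertices an integer $c_{uv}\in\{0,\dots,q-1\}$ with $c_{vu}\equiv -c_{uv}\pmod q$, each edge $uv$ carries the constraint $x_u-x_v\equiv c_{uv}\pmod q$ on assignments $x:V\to\{0,\dots,q-1\}$; the goal is to find an assignment minimizing the number of violated constraints. *)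

From mathcomp Require Import all_boot all_order all_algebra.
Set Implicit Arguments. Unset Strict Implicit. Unset Printing Implicit Defensive.
Import Order.TTheory GRing.Theory Num.Theory.

Definition antisym_rhs (n q : nat) (c : 'I_n -> 'I_n -> 'I_q) : Prop :=
  forall u v : 'I_n, u != v -> ((c v u)%:Z + (c u v)%:Z = 0 %[mod q])%Z.

Definition violated (n q : nat) (c : 'I_n -> 'I_n -> 'I_q) (x : 'I_n -> 'I_q)
  (u v : 'I_n) : bool :=
  ((x u)%:Z - (x v)%:Z != (c u v)%:Z %[mod q])%Z.

Definition cost (n q : nat) (c : 'I_n -> 'I_n -> 'I_q) (x : 'I_n -> 'I_q) : nat :=
  #|[set p : 'I_n * 'I_n | (p.1 < p.2)%N && violated c x p.1 p.2]|.

Definition red_deg (n q : nat) (c : 'I_n -> 'I_n -> 'I_q) (x : 'I_n -> 'I_q)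
  (v : 'I_n) : nat :=
  #|[set u : 'I_n | (u != v) && violated c x u v]|.

From mathcomp Require Import all_boot all_order all_algebra.
From mathcomp Require Import ring lra.
Import Order.TTheory GRing.Theory Num.Theory.
Local Open Scope ring_scope.

(* By antisymmetry
   of the right-hand sides a constraint is violated in one direction iff in the
   other, so the red degrees sum to twice the number of red edges, 2 eps m.  By
   Markov's inequality at most 2 eps m / t vertices have red degree at least
   t = (n - 1)(1 - 2 eps)/2, and 2 eps m / t = eps nu n since 2 m = n (n - 1). *)

Lemma violated_sym {n q : nat} {c : 'I_n -> 'I_n -> 'I_q} (x : 'I_n -> 'I_q)
    (u v : 'I_n) :
  antisym_rhs c -> violated c x u v = violated c x v u.
Proof.
move=> antisym_c; have [-> // | neq_uv] := eqVneq u v.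
have /eqP := antisym_c u v neq_uv; rewrite /violated !eqz_mod_dvd subr0 => dvd_sum.
set s := (c v u)%:Z + (c u v)%:Z.
have -> : (x u)%:Z - (x v)%:Z - (c u v)%:Z = - ((x v)%:Z - (x u)%:Z - (c v u)%:Z) - s.
  by rewrite /s; ring.
by rewrite rpredBr // rpredN.
Qed.

Lemma sum_red_deg n q (c : 'I_n -> 'I_n -> 'I_q) (x : 'I_n -> 'I_q) :
  antisym_rhs c -> (\sum_v red_deg c x v = 2 * cost c x)%N.
Proof.
move=> antisym_c; pose red u v := violated c x u v.
have cost_sum :
    cost c x = (\sum_(u : 'I_n) \sum_(v : 'I_n) ((u < v)%N && red u v : nat))%N.
  rewrite /cost -sum1dep_card pair_big_dep /= big_mkcond.
  by apply: eq_bigr => -[u v] _; case: ifP.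
have red_deg_sum v : red_deg c x v =
    (\sum_(u : 'I_n) (((u < v)%N && red u v : nat) + ((v < u)%N && red v u : nat)))%N.
  rewrite /red_deg -sum1dep_card big_mkcond; apply: eq_bigr => u _.
  rewrite /red (violated_sym x u v antisym_c) neq_ltn.
  by case: ltngtP; case: violated.
under eq_bigr do rewrite red_deg_sum big_split.
by rewrite big_split /= exchange_big -cost_sum addnn mul2n.
Qed.

Lemma card_ge_mul_le_sum (R : numDomainType) (T : finType) (f : T -> nat) (t : R) :
  #|[set v | t <= (f v)%:R]|%:R * t <= (\sum_v f v)%:R.
Proof.
set S := [set v | _]; rewrite -sum1_card natr_sum mulr_suml.
apply: (@le_trans _ _ (\sum_(v in S) (f v)%:R)).
  by apply: ler_sum => v; rewrite inE mul1r.
by rewrite natr_sum [leRHS](bigID (mem S)) /= lerDl sumr_ge0.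
Qed.

Lemma bin2_double k : ('C(k, 2) * 2 = k * k.-1)%N.
Proof.
case: k => [|k] //; rewrite bin2 -[RHS]odd_double_half oddM /=.
by rewrite andNb add0n muln2.
Qed.

Lemma markov_count_bound (R : realFieldType) (card red eps m N : R) :
  1 < N -> eps < 1 / 2 -> m * 2 = N * (N - 1) -> red = 2 * (eps * m) ->
  card * ((N - 1) / 2 - eps * (N - 1)) <= red ->
  card <= eps * (2 / (1 - 2 * eps)) * N.
Proof.
move=> N_gt1 eps_lt m2 red_eq count_le.
have gap_gt0 : 0 < 1 - 2 * eps by lra.
have half_gt0 : 0 < (N - 1) / 2 by rewrite divr_gt0 ?subr_gt0.
have threshold_eq : (N - 1) / 2 - eps * (N - 1) = (1 - 2 * eps) * ((N - 1) / 2).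
  by field.
have red_factor : red = 2 * eps * N * ((N - 1) / 2).
  have m_eq : m = N * (N - 1) / 2 by rewrite -m2; field.
  by rewrite red_eq m_eq; field.
have -> : eps * (2 / (1 - 2 * eps)) * N = 2 * eps * N / (1 - 2 * eps).
  by field; rewrite gt_eqF.
rewrite ler_pdivlMr // -(ler_pM2r half_gt0).
by rewrite -[card * _ * _]mulrA -threshold_eq -red_factor.
Qed.

Theorem lemma3 (n q : nat) (c : 'I_n -> 'I_n -> 'I_q) (OPT : 'I_n -> 'I_q) :
  (0 < q)%N -> (2 <= n)%N ->
  antisym_rhs c ->
  (forall y : 'I_n -> 'I_q, (cost c OPT <= cost c y)%N) ->
  let m : rat := ('C(n, 2))%:R in
  let eps : rat := (cost c OPT)%:R / m in
  0 <= eps -> eps < 1 / 2 ->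
  let nu : rat := 2 / (1 - 2 * eps) in
  (#|[set v : 'I_n | (n%:R - 1) / 2 - eps * (n%:R - 1) <= (red_deg c OPT v)%:R]|)%:R
    <= eps * nu * n%:R.
Proof.
move=> _ n_ge2 antisym_c _ m eps _ eps_lt; rewrite /=.
have m_gt0 : 0 < m by rewrite ltr0n bin_gt0.
apply: (@markov_count_bound _ _ (\sum_v red_deg c OPT v)%:R _ m) => //.
- by rewrite ltr1n.
- by rewrite -natrM bin2_double natrM -subn1 natrB // (leq_trans _ n_ge2).
- by rewrite sum_red_deg // natrM /eps divfK ?gt_eqF.
- exact: card_ge_mul_le_sum.
Qed.
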